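(* Let $m\ge1$, $N\ge1$ and let $i$ be an integer with $0\le i\le mN$. For all integers $b_1,\dots,b_N\in\{0,\dots,m\}$ with $\sum_{j=1}^N b_j=i$, $$\sum_{j=1}^N 2^{-b_j}\;\ge\;\Big(N-i+\lfloor i/N\rfloor N\Big)2^{-\lfloor i/N\rfloor}+\Big(i-\lfloor i/N\rfloor N\Big)2^{-\lceil i/N\rceil},$$ where the right-hand side is the value of $\sum_j 2^{-b_j}$ for the pattern in which $N-i+\lfloor i/N\rfloor N$ symbols contain $\lfloor i/N\rfloor$ erased bits and $i-\lfloor i/N\rfloor N$ symbols contain $\lceil i/N\rceil$ erased bits. Consequently, under the proportional multiplicity assignment, among all patterns of $i$ erased bits this evenly spread pattern is the worst case for the ASD decoding condition $\eta\ge K-1$, where $\eta=\sum_j 2^{-b_j}$.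
   Context: Setting: a Reed–Solomon code of length $N$ and dimension $K$ over $GF(2^m)$ whose symbols are sent as $m$ bits each over a binary erasure channel; $b_j$ is the number of erased bits in the $j$-th received symbol. Under the proportional multiplicity assignment (each of the $2^{b_j}$ candidates of symbol $j$ gets multiplicity $M2^{-b_j}$, $M>0$), the score is $S=M\eta$ and the cost is $C=\frac12M^2\eta$, and the ASD sufficient condition $S\ge\sqrt{2(K-1)C}$ is equivalent to $\eta\ge K-1$. *)

From mathcomp Require Import all_boot all_order all_algebra.
Set Implicit Arguments. Unset Strict Implicit. Unset Printing Implicit Defensive.

Definition ceil_div (i N : nat) : nat := ((i + N.-1) %/ N)%N.

(** The sequence n |-> 2^-n is convex, so it lies above each of its chords
   extended to a line: 2^-b >= 2^-q + (b - q)(2^-(q+1) - 2^-q) for all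
   naturals b and q.  Summing this over the symbols with q = floor(i/N) gives
   N 2^-q + (i - qN)(2^-(q+1) - 2^-q), which is exactly the value of the evenly
   spread pattern: when N divides i the second term vanishes, otherwise
   ceil(i/N) = q + 1.  The bound holds for every b with sum i. *)

From mathcomp Require Import all_boot all_order all_algebra zify ring.
Set Implicit Arguments.
Unset Strict Implicit.
Unset Printing Implicit Defensive.

Import Order.TTheory GRing.Theory Num.Theory.
Local Open Scope ring_scope.

Section ConvexSequence.

Variable R : realDomainType.

Definition convex_seq (f : nat -> R) :=
  forall n, f n.+1 - f n <= f n.+2 - f n.+1.

Variable f : nat -> R.
Hypothesis f_convex : convex_seq f.

Lemma convex_seq_incr_homo :
  {homo (fun n => f n.+1 - f n) : m n / (m <= n)%N >-> m <= n}.
Proof. exact: homo_leq le_refl le_trans f_convex. Qed.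

Lemma convex_seq_chord (q b : nat) :
  f q + (b%:R - q%:R) * (f q.+1 - f q) <= f b.
Proof.
rewrite -lerBrDl; have [le_qb | lt_bq] := leqP q b.
- rewrite -(telescope_sumr f le_qb) -(natrB R le_qb) mulr_natl -sumr_const_nat.
  by apply: ler_sum_nat => k /andP[le_qk _]; apply: convex_seq_incr_homo.
- rewrite -lerN2 -mulNr !opprB.
  rewrite -(telescope_sumr f (ltnW lt_bq)) -(natrB R (ltnW lt_bq)).
  rewrite mulr_natl -sumr_const_nat.
  by apply: ler_sum_nat => k /andP[_ lt_kq]; apply/convex_seq_incr_homo/ltnW.
Qed.

Lemma convex_seq_sum_ge (I : finType) (b : I -> nat) (q : nat) :
  #|I|%:R * f q + ((\sum_j b j)%N%:R - (q * #|I|)%N%:R) * (f q.+1 - f q)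
    <= \sum_j f (b j).
Proof.
apply: le_trans (ler_sum _ (fun j _ => convex_seq_chord q (b j))).
rewrite big_split /= sumr_const -mulr_suml sumrB sumr_const natr_sum.
by rewrite natrM mulr_natr mulr_natl.
Qed.

End ConvexSequence.

Lemma convex_seq_exp (R : realDomainType) (y : R) :
  0 <= y -> convex_seq (fun n => y ^+ n).
Proof.
move=> y_ge0 n; rewrite -subr_ge0.
have -> : y ^+ n.+2 - y ^+ n.+1 - (y ^+ n.+1 - y ^+ n) = y ^+ n * (y - 1) ^+ 2.
  by rewrite !exprS; ring.
by rewrite mulr_ge0 ?sqr_ge0 ?exprn_ge0.
Qed.

Lemma ceil_div_ndvd (i N : nat) :
  (0 < N)%N -> ~~ (N %| i)%N -> ceil_div i N = (i %/ N).+1.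
Proof.
move=> N_gt0 ndvd; have r_gt0 : (0 < i %% N)%N by rewrite lt0n -/(N %| i)%N.
have r_lt := ltn_pmod i N_gt0.
rewrite /ceil_div {1}(divn_eq i N) -addnA divnMDl // -addn1; congr (_ + _)%N.
have -> : (i %% N + N.-1 = N + (i %% N).-1)%N by lia.
by rewrite divnDl // divnn N_gt0 divn_small //; lia.
Qed.

Theorem lemma4 (R : realFieldType) (m N i : nat)
  (hm : (1 <= m)%N) (hN : (1 <= N)%N) (hi : (i <= m * N)%N)
  (b : 'I_N -> nat)
  (hb : forall j, (b j <= m)%N)
  (hsum : (\sum_(j < N) b j)%N = i) :
  \sum_(j < N) (2 : R) ^- (b j) >=
    (N%:R - i%:R + ((i %/ N) * N)%N%:R) * (2 : R) ^- (i %/ N)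
    + (i%:R - ((i %/ N) * N)%N%:R) * (2 : R) ^- (ceil_div i N).
Proof.
set q := (i %/ N)%N.
have halves_convex : convex_seq (fun n => (2 : R)^-1 ^+ n).
  by apply: convex_seq_exp; rewrite invr_ge0 ler0n.
have bound := convex_seq_sum_ge halves_convex b q.
rewrite card_ord hsum in bound; under eq_bigr do rewrite -exprVn.
apply: le_trans bound; rewrite -!exprVn le_eqVlt; apply/predU1l.
have [dvd_Ni | ndvd_Ni] := boolP (N %| i)%N.
- by rewrite divnK //; ring.
- by rewrite ceil_div_ndvd //; ring.
Qed.
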